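(* Let $s\ge 1/4$ and $1\le p\le\infty$ with $p'(s+1/4)>1$. Let $S_1$ be the trilinear operator on sequences on $\mathbb{Z}$ $$S_1(a_1,a_2,a_3)(n)=\sum_{\substack{n_1+n_2+n_3=n\\ n_i\neq n,\ i=1,2,3}} m_1(n_1,n_2,n_3)\prod_{k=1}^3a_k(n_k),\qquad m_1(n_1,n_2,n_3)=\frac{\langle n\rangle^s|n|}{\prod_{k=1}^3\langle n_k\rangle^s\langle n-n_k\rangle^{1/2}},$$ where $n=n_1+n_2+n_3$. Then there is $C<\infty$ with $\|S_1(a_1,a_2,a_3)\|_{\ell^p}\le C\prod_{k=1}^3\|a_k\|_{\ell^p}$ for all $a_1,a_2,a_3\in\ell^p(\mathbb{Z})$.
   Context: $\langle x\rangle=(1+x^2)^{1/2}$; $p'$ is the conjugate exponent of $p$. *)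

From Stdlib Require Import Reals Lra ZArith.
Open Scope R_scope.

Definition japan (x : R) : R := sqrt (1 + x ^ 2).

(* x^y for x >= 0, y > 0, with the convention 0^y = 0 (Stdlib's Rpower 0 y = 1). *)
Definition rpow (x y : R) : R := if Rlt_dec 0 x then Rpower x y else 0.

Inductive expo : Type := Fin (p : R) | Infty.

Definition valid_expo (p : expo) : Prop :=
  match p with Fin r => 1 <= r | Infty => True end.

Definition conj_expo (p : expo) : expo :=
  match p with
  | Infty => Fin 1
  | Fin r => if Req_EM_T r 1 then Infty else Fin (r / (r - 1))
  end.

(* q * x > 1, with the convention infinity * x = +infinity if x > 0. *)
Definition expo_mul_gt1 (q : expo) (x : R) : Prop :=
  match q with Fin r => r * x > 1 | Infty => x > 0 end.

(* Symmetric finite sum over n in [-N, N]. *)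
Definition zsum (N : nat) (f : Z -> R) : R :=
  sum_f_R0 (fun i => f (Z.of_nat i - Z.of_nat N)%Z) (2 * N).

Definition zsum2 (N : nat) (g : Z -> Z -> R) : R :=
  zsum N (fun n1 => zsum N (fun n2 => g n1 n2)).

(* lp_le p a M :  ||a||_{l^p(Z)} <= M  (in particular a is in l^p). *)
Definition lp_le (p : expo) (a : Z -> R) (M : R) : Prop :=
  match p with
  | Fin r => forall N : nat, rpow (zsum N (fun n => rpow (Rabs (a n)) r)) (/ r) <= M
  | Infty => forall n : Z, Rabs (a n) <= M
  end.

Definition m1 (s : R) (n1 n2 n3 : Z) : R :=
  let n := (n1 + n2 + n3)%Z in
  Rpower (japan (IZR n)) s * Rabs (IZR n) /
  ( Rpower (japan (IZR n1)) s * Rpower (japan (IZR (n - n1))) (1/2)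
  * Rpower (japan (IZR n2)) s * Rpower (japan (IZR (n - n2))) (1/2)
  * Rpower (japan (IZR n3)) s * Rpower (japan (IZR (n - n3))) (1/2)).

Definition S1_term (s : R) (a1 a2 a3 : Z -> R) (n n1 n2 : Z) : R :=
  let n3 := (n - n1 - n2)%Z in
  if (Z.eqb n1 n || Z.eqb n2 n || Z.eqb n3 n)%bool then 0
  else m1 s n1 n2 n3 * (a1 n1 * a2 n2 * a3 n3).

(* b = S_1(a1,a2,a3): for every n the defining double series converges
   absolutely and its sum is b n. *)
Definition S1_is (s : R) (a1 a2 a3 : Z -> R) (b : Z -> R) : Prop :=
  forall n : Z,
    (exists B : R, forall N : nat, zsum2 N (fun n1 n2 => Rabs (S1_term s a1 a2 a3 n n1 n2)) <= B)
    /\ Un_cv (fun N => zsum2 N (S1_term s a1 a2 a3 n)) (b n).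

From Stdlib Require Import Reals Lra Lia ZArith Psatz.
Open Scope R_scope.

(** Write [S_1(a1, a2, a3)(n) = sum_(n1, n2) k_n(n1, n2) a1(n1) a2(n2) a3(n3)]
    with [n3 = n - n1 - n2] and [k_n] the multiplier [m1] with the excluded
    frequencies removed.

    1. Pointwise estimate ([pair_decay_holds]): for [n <> 0],
       [log m1 <= c_s - (s + 1/4) (lam_i + lam_j)] for some pair [i <> j],
       where [lam_k = min (log <n_k>, log <n - n_k>)]; this is a case analysis
       on which [|n_k|] exceed [|n|/2].  Hence
       [k_n^q <= C sum_(i<j) psi(n_i) psi(n_j)] with
       [psi(y) = <y>^(-al) + <y - n>^(-al)] and [al = q (s + 1/4)].
    2. Kernel summability ([kernel_pow_sum_le]): for [al > 1], [<y>^(-al)] is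
       summable (by telescoping), so [sum_(n1, n2) k_n^q] is bounded
       uniformly in [n], where [q = p'].
    3. [l^p] bounds: Hölder on each fibre and Young's inequality in [l^1] for
       the triple convolution give the estimate for [1 < p < oo]; [p = 1]
       uses that [k_n] is bounded and [p = oo] the case [q = 1]. *)

(** * Finite sums over integer windows *)

Lemma zsum_ext N f g : (forall n, f n = g n) -> zsum N f = zsum N g.
Proof. intros H; unfold zsum; apply sum_eq; intros; apply H. Qed.

Lemma zsum_le N f g : (forall n, f n <= g n) -> zsum N f <= zsum N g.
Proof. intros H; unfold zsum; apply sum_Rle; intros; apply H. Qed.

Lemma zsum_nonneg N f : (forall n, 0 <= f n) -> 0 <= zsum N f.
Proof. intros H; unfold zsum; apply cond_pos_sum; intros; apply H. Qed.

Lemma zsum_plus N f g : zsum N (fun n => f n + g n) = zsum N f + zsum N g.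
Proof. unfold zsum; apply plus_sum. Qed.

Lemma zsum_minus N f g : zsum N (fun n => f n - g n) = zsum N f - zsum N g.
Proof. unfold zsum; apply minus_sum. Qed.

Lemma zsum_scal N c f : zsum N (fun n => c * f n) = c * zsum N f.
Proof. unfold zsum; rewrite scal_sum; apply sum_eq; intros; ring. Qed.

Lemma sum_f_R0_swap (h : nat -> nat -> R) n m :
  sum_f_R0 (fun i => sum_f_R0 (fun j => h i j) n) m =
  sum_f_R0 (fun j => sum_f_R0 (fun i => h i j) m) n.
Proof.
  induction m as [|m IH]; simpl; [reflexivity|].
  rewrite IH, <- plus_sum. reflexivity.
Qed.

Lemma zsum_swap N K (g : Z -> Z -> R) :
  zsum N (fun a => zsum K (fun b => g a b)) = zsum K (fun b => zsum N (fun a => g a b)).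
Proof. unfold zsum; apply sum_f_R0_swap. Qed.

Lemma zsum2_ext N g h : (forall a b, g a b = h a b) -> zsum2 N g = zsum2 N h.
Proof. intros H; unfold zsum2; apply zsum_ext; intros; apply zsum_ext; auto. Qed.

Lemma zsum2_le N g h : (forall a b, g a b <= h a b) -> zsum2 N g <= zsum2 N h.
Proof. intros H; unfold zsum2; apply zsum_le; intros; apply zsum_le; auto. Qed.

Lemma zsum2_nonneg N g : (forall a b, 0 <= g a b) -> 0 <= zsum2 N g.
Proof. intros H; unfold zsum2; apply zsum_nonneg; intros; apply zsum_nonneg; auto. Qed.

Lemma zsum2_plus N g h : zsum2 N (fun a b => g a b + h a b) = zsum2 N g + zsum2 N h.
Proof. unfold zsum2. rewrite <- zsum_plus. apply zsum_ext; intros; apply zsum_plus. Qed.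

Lemma zsum2_minus N g h : zsum2 N (fun a b => g a b - h a b) = zsum2 N g - zsum2 N h.
Proof. unfold zsum2. rewrite <- zsum_minus. apply zsum_ext; intros; apply zsum_minus. Qed.

Lemma zsum2_scal N c g : zsum2 N (fun a b => c * g a b) = c * zsum2 N g.
Proof. unfold zsum2. rewrite <- zsum_scal. apply zsum_ext; intros; apply zsum_scal. Qed.

Lemma zsum2_abs K (T : Z -> Z -> R) : Rabs (zsum2 K T) <= zsum2 K (fun a b => Rabs (T a b)).
Proof.
  unfold zsum2, zsum. eapply Rle_trans; [apply Rsum_abs|].
  apply sum_Rle; intros. apply Rsum_abs.
Qed.

(** [seg_sum a len f] is the sum of [f] over the integer segment [a, a + len].
    Segments make shifts and inclusions of windows easy to handle. *)
Definition seg_sum (a : Z) (len : nat) (f : Z -> R) : R :=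
  sum_f_R0 (fun i => f (a + Z.of_nat i)%Z) len.

Lemma zsum_seg N f : zsum N f = seg_sum (- Z.of_nat N) (2 * N) f.
Proof. unfold zsum, seg_sum; apply sum_eq; intros; f_equal; lia. Qed.

Lemma zsum_shift_seg N c f :
  zsum N (fun k => f (k + c)%Z) = seg_sum (c - Z.of_nat N) (2 * N) f.
Proof. unfold zsum, seg_sum; apply sum_eq; intros; f_equal; lia. Qed.

Lemma seg_sum_telescope f H : (forall y, f y <= H (y + 1)%Z - H y) ->
  forall a len, seg_sum a len f <= H (a + Z.of_nat len + 1)%Z - H a.
Proof.
  intros Hf a len; induction len as [|len IH]; unfold seg_sum in *.
  - simpl. specialize (Hf a). replace (a + 0)%Z with a by lia.
    replace (a + 0 + 1)%Z with (a + 1)%Z by lia. lra.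
  - rewrite tech5. specialize (Hf (a + Z.of_nat (S len))%Z).
    replace (a + Z.of_nat len + 1)%Z with (a + Z.of_nat (S len))%Z in IH by lia.
    lra.
Qed.

Section SegmentInclusion.

Variable f : Z -> R.
Hypothesis f_nonneg : forall y, 0 <= f y.

Lemma seg_sum_extend_right a len d : seg_sum a len f <= seg_sum a (len + d) f.
Proof.
  induction d as [|d IH]; [rewrite Nat.add_0_r; lra|].
  replace (len + S d)%nat with (S (len + d)) by lia.
  unfold seg_sum in *; rewrite tech5.
  specialize (f_nonneg (a + Z.of_nat (S (len + d)))%Z). lra.
Qed.

Lemma seg_sum_extend_left a len d :
  seg_sum a len f <= seg_sum (a - Z.of_nat d) (len + d) f.
Proof.
  induction d as [|d IH].
  - replace (a - Z.of_nat 0)%Z with a by lia. rewrite Nat.add_0_r; lra.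
  - eapply Rle_trans; [apply IH|].
    replace (len + S d)%nat with (S (len + d)) by lia. unfold seg_sum.
    rewrite (decomp_sum _ (S (len + d))) by lia. simpl pred.
    rewrite (sum_eq (fun i => f (a - Z.of_nat (S d) + Z.of_nat (S i))%Z)
                    (fun i => f (a - Z.of_nat d + Z.of_nat i)%Z)) by (intros; f_equal; lia).
    pose proof (f_nonneg (a - Z.of_nat (S d) + Z.of_nat 0)%Z). lra.
Qed.

Lemma seg_sum_incl a len a' len' :
  (a' <= a)%Z -> (a + Z.of_nat len <= a' + Z.of_nat len')%Z ->
  seg_sum a len f <= seg_sum a' len' f.
Proof.
  intros H1 H2. set (d := Z.to_nat (a - a')).
  eapply Rle_trans; [apply (seg_sum_extend_left a len d)|].
  replace (a - Z.of_nat d)%Z with a' by (unfold d; lia).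
  replace len' with ((len + d) + (len' - (len + d)))%nat by (unfold d; lia).
  apply seg_sum_extend_right.
Qed.

Lemma zsum_mono N M : (N <= M)%nat -> zsum N f <= zsum M f.
Proof. intros H. rewrite !zsum_seg. apply seg_sum_incl; lia. Qed.

Lemma zsum_single N n : (Z.abs_nat n <= N)%nat -> f n <= zsum N f.
Proof.
  intros H. rewrite zsum_seg.
  replace (f n) with (seg_sum n 0 f) by (unfold seg_sum; simpl; f_equal; lia).
  apply seg_sum_incl; lia.
Qed.

Lemma zsum_shift_le N c G : (forall M, zsum M f <= G) ->
  zsum N (fun k => f (k + c)%Z) <= G.
Proof.
  intros HG. set (M := (N + Z.abs_nat c)%nat).
  eapply Rle_trans; [|apply (HG M)].
  rewrite zsum_shift_seg, (zsum_seg M). apply seg_sum_incl; unfold M; lia.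
Qed.

End SegmentInclusion.

Lemma zsum2_mono N M g : (forall a b, 0 <= g a b) -> (N <= M)%nat -> zsum2 N g <= zsum2 M g.
Proof.
  intros H HNM; unfold zsum2. eapply Rle_trans.
  - apply zsum_le. intros a. exact (zsum_mono (fun b => g a b) (H a) N M HNM).
  - apply zsum_mono; auto. intros; apply zsum_nonneg; auto.
Qed.

(** * Real powers, Young's and Hölder's inequalities *)

Lemma exp_le_compat x y : x <= y -> exp x <= exp y.
Proof. intros [H|H]; [left; apply exp_increasing; auto| subst; lra]. Qed.

Lemma exp_le_inv x y : exp x <= exp y -> x <= y.
Proof. intros [H|H]; [left; apply exp_lt_inv; auto| right; apply exp_inv; auto]. Qed.

Lemma ln_le_compat x y : 0 < x -> x <= y -> ln x <= ln y.
Proof. intros Hx [H|H]; [left; apply ln_increasing; auto| subst; lra]. Qed.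

Lemma rpow_nonneg x y : 0 <= rpow x y.
Proof. unfold rpow; destruct (Rlt_dec 0 x); [unfold Rpower; left; apply exp_pos| lra]. Qed.

Lemma rpow_of_pos x y : 0 < x -> rpow x y = exp (y * ln x).
Proof. intros H; unfold rpow; destruct (Rlt_dec 0 x); [reflexivity|lra]. Qed.

Lemma rpow_of_nonpos x y : x <= 0 -> rpow x y = 0.
Proof. intros H; unfold rpow; destruct (Rlt_dec 0 x); [lra|reflexivity]. Qed.

Lemma rpow_exp x e : rpow (exp x) e = exp (e * x).
Proof. rewrite rpow_of_pos by apply exp_pos. rewrite ln_exp; auto. Qed.

Lemma rpow_1 x : 0 <= x -> rpow x 1 = x.
Proof.
  intros [H|H]; [rewrite rpow_of_pos, Rmult_1_l, exp_ln; auto|].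
  subst; apply rpow_of_nonpos; lra.
Qed.

Lemma rpow_inv_1 x : 0 < x -> rpow x (-1) = / x.
Proof.
  intros H. rewrite rpow_of_pos by auto.
  replace (-1 * ln x) with (- ln x) by ring. rewrite exp_Ropp, exp_ln; auto.
Qed.

Lemma rpow_le_compat x y e : 0 <= x <= y -> 0 < e -> rpow x e <= rpow y e.
Proof.
  intros [[H0|H0] H1] He.
  - rewrite !rpow_of_pos by lra. apply exp_le_compat.
    apply Rmult_le_compat_l; [lra|]. apply ln_le_compat; lra.
  - subst. rewrite (rpow_of_nonpos 0) by lra. apply rpow_nonneg.
Qed.

Lemma rpow_mult x y e : 0 <= x -> 0 <= y -> rpow (x * y) e = rpow x e * rpow y e.
Proof.
  intros [Hx|Hx] [Hy|Hy]; try (subst; rewrite ?Rmult_0_r, ?Rmult_0_l, (rpow_of_nonpos 0 e) by lra; ring).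
  rewrite !rpow_of_pos by (try apply Rmult_lt_0_compat; auto).
  rewrite ln_mult, <- exp_plus by auto. f_equal; ring.
Qed.

Lemma rpow_rpow x a b : 0 <= x -> rpow (rpow x a) b = rpow x (a * b).
Proof.
  intros [Hx|Hx].
  - rewrite (rpow_of_pos x a), rpow_of_pos, rpow_of_pos, ln_exp by (auto; apply exp_pos).
    f_equal; ring.
  - subst. rewrite !(rpow_of_nonpos 0) by lra. reflexivity.
Qed.

Lemma rpow_root_r Y r : 0 <= Y -> 0 < r -> rpow (rpow Y (/ r)) r = Y.
Proof.
  intros HY Hr. rewrite rpow_rpow by auto. replace (/ r * r) with 1 by (field; lra).
  apply rpow_1; auto.
Qed.

Lemma rpow_r_root Y r : 0 <= Y -> 0 < r -> rpow (rpow Y r) (/ r) = Y.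
Proof.
  intros HY Hr. rewrite rpow_rpow by auto. replace (r * / r) with 1 by (field; lra).
  apply rpow_1; auto.
Qed.

Lemma rpow_le_root x r Y : 0 <= x -> 0 < r -> rpow x r <= Y -> x <= rpow Y (/ r).
Proof.
  intros Hx Hr H. rewrite <- (rpow_r_root x r Hx Hr).
  apply rpow_le_compat; [split; [apply rpow_nonneg| auto]| apply Rinv_0_lt_compat; auto].
Qed.

(** Convexity of the exponential, the source of Young's inequality. *)
Lemma exp_convex th x y : 0 <= th <= 1 ->
  exp (th * x + (1 - th) * y) <= th * exp x + (1 - th) * exp y.
Proof.
  intros Hth. set (z := th * x + (1 - th) * y).
  assert (Ex : exp x = exp z * exp (x - z)) by (rewrite <- exp_plus; f_equal; ring).
  assert (Ey : exp y = exp z * exp (y - z)) by (rewrite <- exp_plus; f_equal; ring).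
  pose proof (exp_ineq1_le (x - z)). pose proof (exp_ineq1_le (y - z)). pose proof (exp_pos z).
  rewrite Ex, Ey.
  assert (th * (exp z * (1 + (x - z))) <= th * (exp z * exp (x - z))) by
    (apply Rmult_le_compat_l; [lra|]; apply Rmult_le_compat_l; lra).
  assert ((1-th) * (exp z * (1 + (y - z))) <= (1-th) * (exp z * exp (y - z))) by
    (apply Rmult_le_compat_l; [lra|]; apply Rmult_le_compat_l; lra).
  assert (th * (exp z * (1 + (x - z))) + (1-th) * (exp z * (1 + (y - z))) = exp z)
    by (unfold z; ring).
  lra.
Qed.

Lemma young a b q r : 0 <= a -> 0 <= b -> 0 < q -> 0 < r -> / q + / r = 1 ->
  a * b <= rpow a q / q + rpow b r / r.
Proof.
  intros Ha Hb Hq Hr Hqr.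
  pose proof (Rinv_0_lt_compat q Hq). pose proof (Rinv_0_lt_compat r Hr).
  pose proof (rpow_nonneg a q). pose proof (rpow_nonneg b r).
  destruct Ha as [Ha|Ha]; [|subst; unfold Rdiv; nra].
  destruct Hb as [Hb|Hb]; [|subst; unfold Rdiv; nra].
  rewrite !rpow_of_pos by auto.
  replace (a * b) with (exp (/ q * (q * ln a) + (1 - / q) * (r * ln b))).
  - eapply Rle_trans; [apply exp_convex; lra|].
    replace (1 - / q) with (/ r) by lra. unfold Rdiv. lra.
  - rewrite <- (exp_ln a) at 2 by auto. rewrite <- (exp_ln b) at 2 by auto.
    rewrite <- exp_plus. f_equal. replace (1 - / q) with (/ r) by lra. field; lra.
Qed.

Section Holder.

Variables (K : nat) (w c : Z -> Z -> R) (q r : R).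
Hypotheses (Hq : 0 < q) (Hr : 0 < r) (Hqr : / q + / r = 1).
Hypotheses (Hw : forall a b, 0 <= w a b) (Hc : forall a b, 0 <= c a b).

(** Normalized form, obtained by applying Young termwise to
    [(w / W^(1/q)) (c / Y^(1/r))]. *)
Lemma holder_normalized W Y : 0 < W -> 0 < Y ->
  zsum2 K (fun a b => rpow (w a b) q) <= W ->
  zsum2 K (fun a b => rpow (c a b) r) <= Y ->
  zsum2 K (fun a b => w a b * c a b) <= rpow W (/ q) * rpow Y (/ r).
Proof.
  intros HW HY HWq HYr.
  set (sw := rpow W (- / q)). set (sc := rpow Y (- / r)).
  assert (Hsw : rpow W (/ q) * sw = 1).
  { unfold sw. rewrite !rpow_of_pos, <- exp_plus by auto.
    replace (/ q * ln W + - / q * ln W) with 0 by ring. apply exp_0. }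
  assert (Hsc : rpow Y (/ r) * sc = 1).
  { unfold sc. rewrite !rpow_of_pos, <- exp_plus by auto.
    replace (/ r * ln Y + - / r * ln Y) with 0 by ring. apply exp_0. }
  assert (Hsw0 : 0 <= sw) by apply rpow_nonneg. assert (Hsc0 : 0 <= sc) by apply rpow_nonneg.
  assert (Ew : forall x, 0 <= x -> rpow (x * sw) q = rpow x q * / W).
  { intros x Hx. rewrite rpow_mult by lra. unfold sw. rewrite rpow_rpow by lra.
    replace (- / q * q) with (-1) by (field; lra). rewrite rpow_inv_1; auto. }
  assert (Ec : forall x, 0 <= x -> rpow (x * sc) r = rpow x r * / Y).
  { intros x Hx. rewrite rpow_mult by lra. unfold sc. rewrite rpow_rpow by lra.
    replace (- / r * r) with (-1) by (field; lra). rewrite rpow_inv_1; auto. }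
  set (P := rpow W (/ q) * rpow Y (/ r)).
  assert (HP : 0 <= P) by (apply Rmult_le_pos; apply rpow_nonneg).
  assert (Hterm : forall a b, w a b * c a b <=
            P * (/ q * / W * rpow (w a b) q + / r * / Y * rpow (c a b) r)).
  { intros a b.
    replace (w a b * c a b) with (P * ((w a b * sw) * (c a b * sc))).
    - apply Rmult_le_compat_l; auto.
      eapply Rle_trans; [apply (young _ _ q r); try apply Rmult_le_pos; auto|].
      rewrite Ew, Ec by auto. unfold Rdiv; lra.
    - unfold P. transitivity (w a b * c a b * (rpow W (/ q) * sw) * (rpow Y (/ r) * sc));
        [ring| rewrite Hsw, Hsc; ring]. }
  eapply Rle_trans; [apply zsum2_le, Hterm|].
  rewrite zsum2_scal, zsum2_plus, !zsum2_scal.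
  assert (/ q * / W * zsum2 K (fun a b => rpow (w a b) q) <= / q).
  { replace (/ q) with (/ q * / W * W) at 2 by (field; lra).
    apply Rmult_le_compat_l; auto. apply Rmult_le_pos; left; apply Rinv_0_lt_compat; auto. }
  assert (/ r * / Y * zsum2 K (fun a b => rpow (c a b) r) <= / r).
  { replace (/ r) with (/ r * / Y * Y) at 2 by (field; lra).
    apply Rmult_le_compat_l; auto. apply Rmult_le_pos; left; apply Rinv_0_lt_compat; auto. }
  rewrite <- (Rmult_1_r P) at 2. apply Rmult_le_compat_l; auto. lra.
Qed.

Lemma holder2 W : 0 < W -> zsum2 K (fun a b => rpow (w a b) q) <= W ->
  rpow (zsum2 K (fun a b => w a b * c a b)) r
   <= rpow W (r - 1) * zsum2 K (fun a b => rpow (c a b) r).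
Proof.
  intros HW HWq.
  set (X := zsum2 K (fun a b => w a b * c a b)).
  set (Y := zsum2 K (fun a b => rpow (c a b) r)).
  assert (HX : 0 <= X) by (apply zsum2_nonneg; intros; apply Rmult_le_pos; auto).
  assert (HY : 0 <= Y) by (apply zsum2_nonneg; intros; apply rpow_nonneg).
  assert (Hexp : / q * r = r - 1) by (replace (/ q) with (1 - / r) by lra; field; lra).
  assert (HWr : 0 <= rpow W (r - 1)) by apply rpow_nonneg.
  apply Rle_plus_epsilon. intros eps Heps.
  set (Y' := Y + eps / rpow W (r - 1)).
  assert (HWr' : 0 < rpow W (r - 1)) by (rewrite rpow_of_pos by auto; apply exp_pos).
  assert (HY' : 0 < Y') by (unfold Y'; pose proof (Rdiv_lt_0_compat _ _ Heps HWr'); lra).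
  assert (HXY : X <= rpow W (/ q) * rpow Y' (/ r))
    by (apply holder_normalized; [exact HW| exact HY'| exact HWq|];
        unfold Y'; pose proof (Rdiv_lt_0_compat _ _ Heps HWr'); fold Y; lra).
  eapply Rle_trans; [apply rpow_le_compat; [split; [exact HX| exact HXY]| exact Hr]|].
  rewrite rpow_mult, rpow_rpow, Hexp, rpow_root_r by (try apply rpow_nonneg; lra).
  unfold Y'. right. field. lra.
Qed.

End Holder.

Lemma japan_sq y : japan y * japan y = 1 + y ^ 2.
Proof. unfold japan. apply sqrt_sqrt. nra. Qed.

Lemma japan_ge1 y : 1 <= japan y.
Proof. pose proof (japan_sq y). pose proof (sqrt_pos (1 + y^2)). unfold japan in *. nra. Qed.

Lemma japan_pos y : 0 < japan y.
Proof. pose proof (japan_ge1 y); lra. Qed.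

Lemma japan_ge_abs y : Rabs y <= japan y.
Proof.
  pose proof (japan_sq y). pose proof (japan_ge1 y). pose proof (Rabs_pos y).
  pose proof (pow2_abs y). nra.
Qed.

Lemma japan_le_scale k y z : 1 <= k -> Rabs y <= k * Rabs z -> japan y <= k * japan z.
Proof.
  intros Hk H. pose proof (japan_sq y). pose proof (japan_sq z).
  pose proof (japan_pos y). pose proof (japan_pos z).
  pose proof (pow2_abs y). pose proof (pow2_abs z). pose proof (Rabs_pos y).
  assert (y ^ 2 <= k * k * z ^ 2) by nra.
  apply Rsqr_incr_0_var; unfold Rsqr; nra.
Qed.

Definition logbr (y : R) : R := ln (japan y).

Lemma logbr_nonneg y : 0 <= logbr y.
Proof. unfold logbr. rewrite <- ln_1. apply ln_le_compat; [lra| apply japan_ge1]. Qed.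

Lemma logbr_opp y : logbr (- y) = logbr y.
Proof. unfold logbr, japan. do 3 f_equal. ring. Qed.

Lemma logbr_le k y z : 1 <= k -> Rabs y <= k * Rabs z -> logbr y <= ln k + logbr z.
Proof.
  intros Hk H. unfold logbr. rewrite <- ln_mult by (try apply japan_pos; lra).
  apply ln_le_compat; [apply japan_pos| apply japan_le_scale; auto].
Qed.

Lemma logbr_ge k N z : 0 < k -> 0 < N -> N <= k * Rabs z -> ln N <= ln k + logbr z.
Proof.
  intros Hk HN H. unfold logbr. rewrite <- ln_mult by (try apply japan_pos; lra).
  apply ln_le_compat; auto. pose proof (japan_ge_abs z). nra.
Qed.

Lemma logbr_ge_log n : 0 < Rabs n -> ln (Rabs n) <= logbr n.
Proof. intros H. pose proof (logbr_ge 1 (Rabs n) n). rewrite ln_1 in H0. lra. Qed.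

Lemma logbr_le_log n : 1 <= Rabs n -> logbr n <= ln 2 + ln (Rabs n).
Proof.
  intros H. unfold logbr. rewrite <- ln_mult by lra.
  apply ln_le_compat; [apply japan_pos|].
  pose proof (japan_sq n). pose proof (japan_pos n). pose proof (pow2_abs n).
  apply Rsqr_incr_0_var; unfold Rsqr; nra.
Qed.

(** * The pointwise estimate of the multiplier *)

Ltac rabs := unfold Rabs; repeat destruct Rcase_abs; lra.

Lemma abs_far_from_small n a : Rabs a < Rabs n / 2 -> Rabs n <= 2 * Rabs (n - a).
Proof. rabs. Qed.
Lemma abs_sum3 n a b c : n = a + b + c -> Rabs n <= Rabs a + Rabs b + Rabs c.
Proof. rabs. Qed.
Lemma abs_sum3_diffs n a b c : n = a + b + c ->
  2 * Rabs n <= Rabs (n - a) + Rabs (n - b) + Rabs (n - c).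
Proof. rabs. Qed.
Lemma abs_diff_le n a : Rabs (n - a) <= Rabs n + Rabs a.
Proof. rabs. Qed.
Lemma abs_diff_other n a b c : n = a + b + c -> Rabs (n - b) <= Rabs n + Rabs c + Rabs (n - a).
Proof. rabs. Qed.
Lemma abs_lower_diffs n a b c : n = a + b + c -> Rabs n - Rabs c <= Rabs (n - a) + Rabs (n - b).
Proof. rabs. Qed.

Lemma ln4 : ln 4 = 2 * ln 2.
Proof. replace 4 with (2 * 2) by ring. rewrite ln_mult by lra. ring. Qed.
Lemma ln8 : ln 8 = 3 * ln 2.
Proof. replace 8 with (2 * 4) by ring. rewrite ln_mult, ln4 by lra. ring. Qed.
Lemma ln2_pos : 0 < ln 2.
Proof. rewrite <- ln_1. apply ln_increasing; lra. Qed.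

Lemma logbr_mono y z : Rabs y <= Rabs z -> logbr y <= logbr z.
Proof. intros H. pose proof (logbr_le 1 y z). rewrite ln_1 in H0. lra. Qed.

Lemma logbr_le2 y z : Rabs y <= 2 * Rabs z -> logbr y <= ln 2 + logbr z.
Proof. apply logbr_le; lra. Qed.

Lemma logbr_le4 y z : Rabs y <= 4 * Rabs z -> logbr y <= 2 * ln 2 + logbr z.
Proof. rewrite <- ln4. apply logbr_le; lra. Qed.

Lemma logbr_le8 y z : Rabs y <= 8 * Rabs z -> logbr y <= 3 * ln 2 + logbr z.
Proof. rewrite <- ln8. apply logbr_le; lra. Qed.

Lemma log_le2 n z : 0 < Rabs n -> Rabs n <= 2 * Rabs z -> ln (Rabs n) <= ln 2 + logbr z.
Proof. intros; apply logbr_ge; lra. Qed.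

Lemma log_le4 n z : 0 < Rabs n -> Rabs n <= 4 * Rabs z -> ln (Rabs n) <= 2 * ln 2 + logbr z.
Proof. rewrite <- ln4. intros; apply logbr_ge; lra. Qed.

Definition log_m1 (s n n1 n2 n3 : R) : R :=
  s * logbr n + ln (Rabs n) - s * (logbr n1 + logbr n2 + logbr n3)
  - / 2 * (logbr (n - n1) + logbr (n - n2) + logbr (n - n3)).

Definition log_min (n y : R) : R := Rmin (logbr y) (logbr (n - y)).

Lemma log_min_le n y : log_min n y <= logbr y /\ log_min n y <= logbr (n - y).
Proof. unfold log_min; split; [apply Rmin_l| apply Rmin_r]. Qed.

Lemma log_min_nonneg n y : 0 <= log_min n y.
Proof. unfold log_min. apply Rmin_glb; apply logbr_nonneg. Qed.

Lemma log_min_reflect n y : log_min n (n - y) = log_min n y.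
Proof. unfold log_min. replace (n - (n - y)) with y by ring. apply Rmin_comm. Qed.

Definition decay_const (s : R) : R := 6 * (s + 1) * ln 2.

Section PointwiseEstimate.

Variable s : R.
Hypothesis Hs : s >= 1/4.

Definition pair_decay (n n1 n2 n3 : R) : Prop :=
  log_m1 s n n1 n2 n3 <= decay_const s - (s + /4) * (log_min n n1 + log_min n n2) \/
  log_m1 s n n1 n2 n3 <= decay_const s - (s + /4) * (log_min n n1 + log_min n n3) \/
  log_m1 s n n1 n2 n3 <= decay_const s - (s + /4) * (log_min n n2 + log_min n n3).

Lemma pair_decay_swap12 n a b c : pair_decay n a b c -> pair_decay n b a c.
Proof.
  unfold pair_decay. replace (log_m1 s n b a c) with (log_m1 s n a b c) by (unfold log_m1; ring).
  intros [H|[H|H]]; lra.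
Qed.

Lemma pair_decay_rot n a b c : pair_decay n a b c -> pair_decay n b c a.
Proof.
  unfold pair_decay. replace (log_m1 s n b c a) with (log_m1 s n a b c) by (unfold log_m1; ring).
  intros [H|[H|H]]; lra.
Qed.

Lemma pair_decay_swap23 n a b c : pair_decay n a b c -> pair_decay n a c b.
Proof.
  unfold pair_decay. replace (log_m1 s n a c b) with (log_m1 s n a b c) by (unfold log_m1; ring).
  intros [H|[H|H]]; lra.
Qed.

Lemma mul_s_le a b : a <= b -> s * a <= s * b.
Proof. intros; apply Rmult_le_compat_l; lra. Qed.
Lemma mul_s4_le a b : a <= b -> (s - /4) * a <= (s - /4) * b.
Proof. intros; apply Rmult_le_compat_l; lra. Qed.
Lemma mul_rho_le a b : a <= b -> (s + /4) * a <= (s + /4) * b.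
Proof. intros; apply Rmult_le_compat_l; lra. Qed.

Lemma output_log_facts n : 1 <= Rabs n ->
  ln (Rabs n) <= logbr n /\ logbr n <= ln 2 + ln (Rabs n) /\ 0 < ln 2.
Proof. intros Hn. repeat split; [apply logbr_ge_log; lra| apply logbr_le_log; auto| apply ln2_pos]. Qed.

(** All three inputs are small, [|n_k| < |n|/2]; [|ni| >= |n|/3] is the
    largest.  All [|n - n_k|] are comparable to [|n|], and the decay comes
    from the pair [(j, l)]. *)
Lemma case_all_small n ni nj nl : 1 <= Rabs n ->
  Rabs ni < Rabs n / 2 -> Rabs nj < Rabs n / 2 -> Rabs nl < Rabs n / 2 ->
  Rabs n <= 3 * Rabs ni -> pair_decay n ni nj nl.
Proof.
  intros Hn Hi Hj Hl H3.
  destruct (output_log_facts n Hn) as [B1 [B2 B3]].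
  assert (Di : ln (Rabs n) <= ln 2 + logbr (n - ni)) by (apply log_le2, abs_far_from_small; lra).
  assert (Dj : ln (Rabs n) <= ln 2 + logbr (n - nj)) by (apply log_le2, abs_far_from_small; lra).
  assert (Dl : ln (Rabs n) <= ln 2 + logbr (n - nl)) by (apply log_le2, abs_far_from_small; lra).
  assert (Fi : logbr n <= 2 * ln 2 + logbr ni) by (apply logbr_le4; lra).
  assert (Fj : logbr nj <= logbr n) by (apply logbr_mono; lra).
  assert (Fl : logbr nl <= logbr n) by (apply logbr_mono; lra).
  pose proof (mul_s_le _ _ Fi).
  destruct (log_min_le n nj) as [Lj _]. destruct (log_min_le n nl) as [Ll _].
  pose proof (mul_rho_le _ _ (Rplus_le_compat _ _ _ _ Lj Ll)).
  assert (0 <= s * ln 2) by (apply Rmult_le_pos; lra).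
  unfold pair_decay, log_m1, decay_const. right; right. lra.
Qed.

(** Exactly one large input [ni]: the decay comes from [ni] (through
    [|n - ni|]) paired with the larger of the two small inputs. *)
Lemma case_one_large n ni nj nl : 1 <= Rabs n -> n = ni + nj + nl ->
  Rabs ni >= Rabs n / 2 -> Rabs nj < Rabs n / 2 -> Rabs nl < Rabs n / 2 ->
  pair_decay n ni nj nl.
Proof.
  intros Hn Hsum Hi Hj Hl.
  destruct (output_log_facts n Hn) as [B1 [B2 B3]].
  assert (Fi : logbr n <= ln 2 + logbr ni) by (apply logbr_le2; lra).
  assert (Dj : ln (Rabs n) <= ln 2 + logbr (n - nj)) by (apply log_le2, abs_far_from_small; lra).
  assert (Dl : ln (Rabs n) <= ln 2 + logbr (n - nl)) by (apply log_le2, abs_far_from_small; lra).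
  pose proof (mul_s_le _ _ Fi).
  assert (Hdiff : Rabs (n - ni) <= Rabs nj + Rabs nl)
    by (replace (n - ni) with (nj + nl) by lra; apply Rabs_triang).
  destruct (log_min_le n ni) as [_ Li].
  assert (0 <= s * ln 2) by (apply Rmult_le_pos; lra).
  destruct (Rle_dec (Rabs nj) (Rabs nl)) as [Hjl|Hjl].
  - assert (Gj : logbr nj <= logbr nl) by (apply logbr_mono; lra).
    assert (Gi : logbr (n - ni) <= ln 2 + logbr nl) by (apply logbr_le2; lra).
    pose proof (mul_s4_le _ _ Gi).
    destruct (log_min_le n nj) as [Lj _].
    pose proof (mul_rho_le _ _ (Rplus_le_compat _ _ _ _ Li Lj)).
    unfold pair_decay, log_m1, decay_const. left. lra.
  - assert (Gl : logbr nl <= logbr nj) by (apply logbr_mono; lra).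
    assert (Gi : logbr (n - ni) <= ln 2 + logbr nj) by (apply logbr_le2; lra).
    pose proof (mul_s4_le _ _ Gi).
    destruct (log_min_le n nl) as [Ll _].
    pose proof (mul_rho_le _ _ (Rplus_le_compat _ _ _ _ Li Ll)).
    unfold pair_decay, log_m1, decay_const. right; left. lra.
Qed.

(** Two large inputs [ni, nj] and [|n - ni| >= |n|/4]: the decay comes from
    [nj] paired with whichever of [nl] and [ni] has the smaller bracket. *)
Lemma case_two_large n ni nj nl : 1 <= Rabs n -> n = ni + nj + nl ->
  Rabs ni >= Rabs n / 2 -> Rabs nj >= Rabs n / 2 -> Rabs nl < Rabs n / 2 ->
  Rabs n <= 4 * Rabs (n - ni) -> pair_decay n ni nj nl.
Proof.
  intros Hn Hsum Hi Hj Hl H4.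
  destruct (output_log_facts n Hn) as [B1 [B2 B3]].
  assert (Fi : logbr n <= ln 2 + logbr ni) by (apply logbr_le2; lra).
  assert (Dl : ln (Rabs n) <= ln 2 + logbr (n - nl)) by (apply log_le2, abs_far_from_small; lra).
  assert (Di : ln (Rabs n) <= 2 * ln 2 + logbr (n - ni)) by (apply log_le4; lra).
  assert (Hdiff : Rabs (n - ni) <= Rabs nj + Rabs nl)
    by (replace (n - ni) with (nj + nl) by lra; apply Rabs_triang).
  assert (Gi : logbr (n - ni) <= ln 2 + logbr nj) by (apply logbr_le2; lra).
  pose proof (mul_s_le _ _ Fi).
  assert (s * (logbr (n - ni) - ln 2) <= s * logbr nj) by (apply mul_s_le; lra).
  pose proof (abs_diff_other n ni nj nl Hsum).
  assert (0 <= s * ln 2) by (apply Rmult_le_pos; lra).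
  destruct (Rle_dec (Rabs nl) (Rabs (n - ni))) as [Hc|Hc].
  - assert (Gl : logbr nl <= logbr (n - ni)) by (apply logbr_mono; lra).
    assert (Gj : logbr (n - nj) <= 3 * ln 2 + logbr (n - ni)) by (apply logbr_le8; lra).
    pose proof (mul_s4_le _ _ Gj).
    destruct (log_min_le n nl) as [Ll _]. destruct (log_min_le n nj) as [_ Lj].
    pose proof (mul_rho_le _ _ (Rplus_le_compat _ _ _ _ Lj Ll)).
    unfold pair_decay, log_m1, decay_const. right; right. lra.
  - assert (Gi' : logbr (n - ni) <= logbr nl) by (apply logbr_mono; lra).
    assert (Gj : logbr (n - nj) <= 3 * ln 2 + logbr nl) by (apply logbr_le8; lra).
    pose proof (mul_s4_le _ _ Gj).
    destruct (log_min_le n ni) as [_ Li]. destruct (log_min_le n nj) as [_ Lj].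
    pose proof (mul_rho_le _ _ (Rplus_le_compat _ _ _ _ Li Lj)).
    unfold pair_decay, log_m1, decay_const. left. lra.
Qed.

(** All three inputs are large and [|n - ni| >= 2|n|/3]: the decay comes from
    the pair [(j, l)] through [|n - nj|] and [|n - nl|]. *)
Lemma case_all_large n ni nj nl : 1 <= Rabs n ->
  Rabs ni >= Rabs n / 2 -> Rabs nj >= Rabs n / 2 -> Rabs nl >= Rabs n / 2 ->
  2 * Rabs n <= 3 * Rabs (n - ni) -> pair_decay n ni nj nl.
Proof.
  intros Hn Hi Hj Hl H3.
  destruct (output_log_facts n Hn) as [B1 [B2 B3]].
  assert (Fi : logbr n <= ln 2 + logbr ni) by (apply logbr_le2; lra).
  assert (Di : ln (Rabs n) <= ln 2 + logbr (n - ni)) by (apply log_le2; lra).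
  pose proof (abs_diff_le n nj). pose proof (abs_diff_le n nl).
  assert (Yj : logbr (n - nj) <= 2 * ln 2 + logbr nj) by (apply logbr_le4; lra).
  assert (Yl : logbr (n - nl) <= 2 * ln 2 + logbr nl) by (apply logbr_le4; lra).
  assert (Zj : ln (Rabs n) <= ln 2 + logbr nj) by (apply log_le2; lra).
  assert (Zl : ln (Rabs n) <= ln 2 + logbr nl) by (apply log_le2; lra).
  pose proof (mul_s_le _ _ Fi).
  assert ((s - /4) * (logbr (n - nj) - 2 * ln 2) <= (s - /4) * logbr nj) by (apply mul_s4_le; lra).
  assert ((s - /4) * (logbr (n - nl) - 2 * ln 2) <= (s - /4) * logbr nl) by (apply mul_s4_le; lra).
  destruct (log_min_le n nj) as [_ Lj]. destruct (log_min_le n nl) as [_ Ll].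
  pose proof (mul_rho_le _ _ (Rplus_le_compat _ _ _ _ Lj Ll)).
  assert (0 <= s * ln 2) by (apply Rmult_le_pos; lra).
  unfold pair_decay, log_m1, decay_const. right; right. lra.
Qed.

(** The pointwise estimate, by symmetry reduced to the four cases above. *)
Lemma pair_decay_holds n n1 n2 n3 : 1 <= Rabs n -> n = n1 + n2 + n3 ->
  pair_decay n n1 n2 n3.
Proof.
  intros Hn Hsum.
  pose proof (abs_sum3 n n1 n2 n3 Hsum). pose proof (abs_sum3_diffs n n1 n2 n3 Hsum).
  pose proof (abs_lower_diffs n n1 n2 n3 Hsum). pose proof (abs_lower_diffs n n1 n3 n2 ltac:(lra)).
  pose proof (abs_lower_diffs n n2 n3 n1 ltac:(lra)).
  destruct (Rlt_dec (Rabs n1) (Rabs n / 2)) as [S1|B1];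
  destruct (Rlt_dec (Rabs n2) (Rabs n / 2)) as [S2|B2];
  destruct (Rlt_dec (Rabs n3) (Rabs n / 2)) as [S3|B3];
  try apply Rnot_lt_le in B1; try apply Rnot_lt_le in B2; try apply Rnot_lt_le in B3.
  - destruct (Rle_dec (Rabs n) (3 * Rabs n1)).
    { apply case_all_small; auto; lra. }
    destruct (Rle_dec (Rabs n) (3 * Rabs n2)).
    { apply pair_decay_swap12; apply case_all_small; auto; lra. }
    apply pair_decay_rot; apply case_all_small; auto; lra.
  - apply pair_decay_rot; apply case_one_large; auto; lra.
  - apply pair_decay_swap12; apply case_one_large; auto; lra.
  - destruct (Rle_dec (Rabs n) (4 * Rabs (n - n2))).
    { apply pair_decay_rot, pair_decay_rot; apply case_two_large; auto; lra. }
    apply pair_decay_rot, pair_decay_swap23; apply case_two_large; auto; lra.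
  - apply case_one_large; auto; lra.
  - destruct (Rle_dec (Rabs n) (4 * Rabs (n - n1))).
    { apply pair_decay_swap23; apply case_two_large; auto; lra. }
    apply pair_decay_rot; apply case_two_large; auto; lra.
  - destruct (Rle_dec (Rabs n) (4 * Rabs (n - n1))).
    { apply case_two_large; auto; lra. }
    apply pair_decay_swap12; apply case_two_large; auto; lra.
  - destruct (Rle_dec (2 * Rabs n) (3 * Rabs (n - n1))).
    { apply case_all_large; auto; lra. }
    destruct (Rle_dec (2 * Rabs n) (3 * Rabs (n - n2))).
    { apply pair_decay_swap12; apply case_all_large; auto; lra. }
    apply pair_decay_rot; apply case_all_large; auto; lra.
Qed.

End PointwiseEstimate.

(** * The kernel of [S_1] and its pointwise bounds *)

Lemma m1_exp s n1 n2 n3 : (n1 + n2 + n3 <> 0)%Z ->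
  m1 s n1 n2 n3 = exp (log_m1 s (IZR (n1 + n2 + n3)) (IZR n1) (IZR n2) (IZR n3)).
Proof.
  intros Hn. unfold m1, log_m1, Rpower, logbr. cbv zeta.
  rewrite !minus_IZR.
  set (nn := IZR (n1 + n2 + n3)).
  assert (Hnn : 0 < Rabs nn) by (apply Rabs_pos_lt, not_0_IZR; auto).
  rewrite <- (exp_ln (Rabs nn)) at 1 by auto.
  set (Ln := ln (japan nn)). set (L1 := ln (japan (IZR n1))).
  set (L2 := ln (japan (IZR n2))). set (L3 := ln (japan (IZR n3))).
  set (X1 := ln (japan (nn - IZR n1))). set (X2 := ln (japan (nn - IZR n2))).
  set (X3 := ln (japan (nn - IZR n3))).
  replace (s * Ln + ln (Rabs nn) - s * (L1 + L2 + L3) - / 2 * (X1 + X2 + X3))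
    with ((s * Ln + ln (Rabs nn)) + - (s * L1 + 1/2 * X1 + s * L2 + 1/2 * X2 + s * L3 + 1/2 * X3))
    by field.
  rewrite exp_plus, exp_Ropp, !exp_plus. reflexivity.
Qed.

Lemma m1_zero s n1 n2 n3 : (n1 + n2 + n3 = 0)%Z -> m1 s n1 n2 n3 = 0.
Proof. intros H. unfold m1. cbv zeta. rewrite H, Rabs_R0. unfold Rdiv. ring. Qed.

Definition kernel (s : R) (n n1 n2 : Z) : R :=
  if (Z.eqb n1 n || Z.eqb n2 n || Z.eqb (n - n1 - n2) n)%bool then 0
  else m1 s n1 n2 (n - n1 - n2).

Lemma S1_term_kernel s a1 a2 a3 n n1 n2 :
  S1_term s a1 a2 a3 n n1 n2 = kernel s n n1 n2 * (a1 n1 * a2 n2 * a3 (n - n1 - n2)%Z).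
Proof. unfold S1_term, kernel. destruct (_ || _)%bool; [ring| reflexivity]. Qed.

Lemma kernel_cases s n n1 n2 : s >= 1/4 ->
  kernel s n n1 n2 = 0 \/
  (kernel s n n1 n2 = exp (log_m1 s (IZR n) (IZR n1) (IZR n2) (IZR (n - n1 - n2)))
   /\ pair_decay s (IZR n) (IZR n1) (IZR n2) (IZR (n - n1 - n2))).
Proof.
  intros Hs. unfold kernel. destruct (_ || _)%bool; [left; reflexivity|].
  destruct (Z.eq_dec n 0) as [Hn0|Hn0]; [left; apply m1_zero; lia|right].
  rewrite m1_exp by lia. replace (n1 + n2 + (n - n1 - n2))%Z with n by ring.
  split; [reflexivity|]. apply pair_decay_holds; auto.
  - rewrite <- abs_IZR. apply IZR_le. lia.
  - rewrite !minus_IZR. ring.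
Qed.

Lemma kernel_nonneg s n n1 n2 : 0 <= kernel s n n1 n2.
Proof.
  unfold kernel. destruct (_ || _)%bool; [lra|].
  destruct (Z.eq_dec (n1 + n2 + (n - n1 - n2)) 0).
  - rewrite m1_zero; auto; lra.
  - rewrite m1_exp; auto. left; apply exp_pos.
Qed.

(** The kernel is bounded (used for [p = 1]), since all [lam_k >= 0]. *)
Lemma kernel_le_const s n n1 n2 : s >= 1/4 -> kernel s n n1 n2 <= exp (decay_const s).
Proof.
  intros Hs. destruct (kernel_cases s n n1 n2 Hs) as [-> | [-> HK]]; [left; apply exp_pos|].
  apply exp_le_compat. unfold pair_decay in HK.
  assert (Hrho : 0 <= s + /4) by lra.
  pose proof (Rmult_le_pos _ _ Hrho (log_min_nonneg (IZR n) (IZR n1))).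
  pose proof (Rmult_le_pos _ _ Hrho (log_min_nonneg (IZR n) (IZR n2))).
  pose proof (Rmult_le_pos _ _ Hrho (log_min_nonneg (IZR n) (IZR (n - n1 - n2)))).
  destruct HK as [HK|[HK|HK]]; lra.
Qed.

Definition decay (al : R) (y : Z) : R := exp (- al * logbr (IZR y)).

Definition decay2 (al : R) (n y : Z) : R := decay al y + decay al (y - n).

Lemma decay_pos al y : 0 < decay al y.
Proof. apply exp_pos. Qed.

Lemma decay2_nonneg al n y : 0 <= decay2 al n y.
Proof. unfold decay2; pose proof (decay_pos al y); pose proof (decay_pos al (y - n)); lra. Qed.

Lemma exp_log_min_le_decay2 al n y : 0 <= al ->
  exp (- al * log_min (IZR n) (IZR y)) <= decay2 al n y.
Proof.
  intros Hal. unfold decay2, decay, log_min. rewrite minus_IZR.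
  replace (IZR n - IZR y) with (- (IZR y - IZR n)) by ring. rewrite logbr_opp.
  pose proof (exp_pos (- al * logbr (IZR y))). pose proof (exp_pos (- al * logbr (IZR y - IZR n))).
  destruct (Rle_dec (logbr (IZR y)) (logbr (IZR y - IZR n))).
  - rewrite Rmin_left by auto. lra.
  - rewrite Rmin_right by lra. lra.
Qed.

(** The three pairings of the decay profiles of [n1], [n2] and [n3],
    where [n3] is encoded by [n - n3 = n1 + n2]. *)
Definition pair_profile (al : R) (n n1 n2 : Z) : R :=
  decay2 al n n1 * decay2 al n n2 + decay2 al n n1 * decay2 al n (n1 + n2)
  + decay2 al n n2 * decay2 al n (n1 + n2).

Lemma exp_pair_le q E c rho x y X Y : 0 <= q ->
  E <= c - rho * (x + y) ->
  exp (- (q * rho) * x) <= X -> exp (- (q * rho) * y) <= Y ->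
  exp (q * E) <= exp (q * c) * (X * Y).
Proof.
  intros Hq HE Hx Hy.
  apply Rle_trans with (exp (q * c) * (exp (- (q * rho) * x) * exp (- (q * rho) * y))).
  - rewrite <- !exp_plus. apply exp_le_compat.
    assert (q * E <= q * (c - rho * (x + y))) by (apply Rmult_le_compat_l; lra). lra.
  - apply Rmult_le_compat_l; [left; apply exp_pos|].
    apply Rmult_le_compat; try (left; apply exp_pos); auto.
Qed.

Lemma kernel_pow_bound s q n n1 n2 : s >= 1/4 -> 0 < q ->
  rpow (kernel s n n1 n2) q
  <= exp (q * decay_const s) * pair_profile (q * (s + /4)) n n1 n2.
Proof.
  intros Hs Hq. set (al := q * (s + /4)).
  assert (Hal : 0 <= al) by (unfold al; apply Rmult_le_pos; lra).
  pose proof (decay2_nonneg al n n1). pose proof (decay2_nonneg al n n2).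
  pose proof (decay2_nonneg al n (n1 + n2)).
  assert (P12 : 0 <= decay2 al n n1 * decay2 al n n2) by (apply Rmult_le_pos; auto).
  assert (P13 : 0 <= decay2 al n n1 * decay2 al n (n1 + n2)) by (apply Rmult_le_pos; auto).
  assert (P23 : 0 <= decay2 al n n2 * decay2 al n (n1 + n2)) by (apply Rmult_le_pos; auto).
  pose proof (exp_pos (q * decay_const s)).
  destruct (kernel_cases s n n1 n2 Hs) as [-> | [-> HK]].
  { rewrite rpow_of_nonpos by lra. unfold pair_profile. apply Rmult_le_pos; lra. }
  rewrite rpow_exp.
  pose proof (exp_log_min_le_decay2 al n n1 Hal) as E1.
  pose proof (exp_log_min_le_decay2 al n n2 Hal) as E2.
  pose proof (exp_log_min_le_decay2 al n (n1 + n2) Hal) as E3.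
  replace (IZR (n1 + n2)) with (IZR n - IZR (n - n1 - n2)) in E3
    by (rewrite !minus_IZR, plus_IZR; ring).
  rewrite log_min_reflect in E3.
  unfold pair_profile, pair_decay in *.
  destruct HK as [HK|[HK|HK]].
  - pose proof (exp_pair_le q _ _ _ _ _ _ _ (Rlt_le _ _ Hq) HK E1 E2).
    apply Rle_trans with (exp (q * decay_const s) * (decay2 al n n1 * decay2 al n n2)); auto.
    apply Rmult_le_compat_l; lra.
  - pose proof (exp_pair_le q _ _ _ _ _ _ _ (Rlt_le _ _ Hq) HK E1 E3).
    apply Rle_trans with (exp (q * decay_const s) * (decay2 al n n1 * decay2 al n (n1 + n2))); auto.
    apply Rmult_le_compat_l; lra.
  - pose proof (exp_pair_le q _ _ _ _ _ _ _ (Rlt_le _ _ Hq) HK E2 E3).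
    apply Rle_trans with (exp (q * decay_const s) * (decay2 al n n2 * decay2 al n (n1 + n2))); auto.
    apply Rmult_le_compat_l; lra.
Qed.

(** * Uniform summability of the decay profile for [al > 1]

    [sum_y <y>^(-al)] is bounded by telescoping against the potential
    [(m + 1)^(1 - al)], whose decrements dominate [<m>^(-al)]. *)

Definition tail_pow (al m : R) : R := exp ((1 - al) * ln (m + 1)).

Lemma ln_succ_lower m : 0 <= m -> / (m + 2) <= ln (m + 2) - ln (m + 1).
Proof.
  intros Hm. pose proof (exp_ineq1_le (- / (m + 2))).
  assert (Hp : 0 < / (m + 2)) by (apply Rinv_0_lt_compat; lra).
  assert (E : (m + 1) / (m + 2) = 1 + - / (m + 2)) by (field; lra).
  assert (ln ((m + 1) / (m + 2)) <= - / (m + 2)).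
  { apply exp_le_inv. rewrite exp_ln by (apply Rdiv_lt_0_compat; lra). lra. }
  unfold Rdiv in H0. rewrite ln_mult, ln_Rinv in H0 by lra. lra.
Qed.

Lemma tail_pow_decrement al m : 1 < al -> 0 <= m ->
  (al - 1) * exp (- al * ln (m + 2)) <= tail_pow al m - tail_pow al (m + 1).
Proof.
  intros Hal Hm. pose proof (ln_succ_lower m Hm) as Hu.
  set (u := ln (m + 2) - ln (m + 1)) in *.
  set (G1 := tail_pow al (m + 1)).
  assert (HG : tail_pow al m = G1 * exp ((al - 1) * u)).
  { unfold G1, tail_pow. rewrite <- exp_plus. f_equal. unfold u.
    replace (m + 1 + 1) with (m + 2) by ring. ring. }
  assert (HG1 : exp (- al * ln (m + 2)) = G1 * / (m + 2)).
  { unfold G1, tail_pow. replace (m + 1 + 1) with (m + 2) by ring.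
    rewrite <- (exp_ln (m + 2)) at 3 by lra. rewrite <- exp_Ropp, <- exp_plus. f_equal. ring. }
  rewrite HG, HG1.
  pose proof (exp_ineq1_le ((al - 1) * u)).
  assert (HG0 : 0 < G1) by apply exp_pos.
  assert ((al - 1) * / (m + 2) <= (al - 1) * u) by (apply Rmult_le_compat_l; lra).
  assert (G1 * (1 + (al - 1) * u) <= G1 * exp ((al - 1) * u)) by (apply Rmult_le_compat_l; lra).
  nra.
Qed.

Lemma decay_le_shifted al m : 0 <= al -> 0 <= m ->
  exp (- al * logbr m) <= exp (al * ln 3) * exp (- al * ln (m + 2)).
Proof.
  intros Hal Hm. rewrite <- exp_plus. apply exp_le_compat.
  assert (ln (m + 2) <= ln 3 + logbr m).
  { unfold logbr. rewrite <- ln_mult by (try apply japan_pos; lra).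
    apply ln_le_compat; [lra|]. pose proof (japan_ge1 m). pose proof (japan_ge_abs m).
    rewrite Rabs_right in H0 by lra. lra. }
  assert (al * ln (m + 2) <= al * (ln 3 + logbr m)) by (apply Rmult_le_compat_l; lra).
  lra.
Qed.

Definition decay_sum_const (al : R) : R := exp (al * ln 3) / (al - 1).

Lemma decay_sum_const_pos al : 1 < al -> 0 < decay_sum_const al.
Proof. intros; unfold decay_sum_const. apply Rdiv_lt_0_compat; [apply exp_pos| lra]. Qed.

Lemma decay_le_tail_diff al m : 1 < al -> 0 <= m ->
  exp (- al * logbr m) <= decay_sum_const al * (tail_pow al m - tail_pow al (m + 1)).
Proof.
  intros Hal Hm. eapply Rle_trans; [apply decay_le_shifted; lra|].
  pose proof (tail_pow_decrement al m Hal Hm). pose proof (exp_pos (al * ln 3)).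
  unfold decay_sum_const, Rdiv.
  replace (exp (al * ln 3) * / (al - 1) * (tail_pow al m - tail_pow al (m + 1)))
    with (exp (al * ln 3) * ((tail_pow al m - tail_pow al (m + 1)) / (al - 1))) by (field; lra).
  apply Rmult_le_compat_l; [lra|]. apply Rmult_le_reg_l with (al - 1); [lra|].
  replace ((al - 1) * ((tail_pow al m - tail_pow al (m + 1)) / (al - 1)))
    with (tail_pow al m - tail_pow al (m + 1)) by (field; lra). lra.
Qed.

Lemma tail_pow_bounds al m : 1 < al -> 0 <= m -> 0 < tail_pow al m <= 1.
Proof.
  intros Hal Hm. unfold tail_pow. split; [apply exp_pos|].
  assert (0 <= ln (m + 1)) by (rewrite <- ln_1; apply ln_le_compat; lra).
  assert (0 <= (al - 1) * ln (m + 1)) by (apply Rmult_le_pos; lra).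
  apply Rle_trans with (exp 0); [apply exp_le_compat; lra| rewrite exp_0; lra].
Qed.

Lemma tail_pow_0 al : tail_pow al 0 = 1.
Proof. unfold tail_pow. rewrite Rplus_0_l, ln_1, Rmult_0_r. apply exp_0. Qed.

Lemma decay_even al y : decay al (- y) = decay al y.
Proof. unfold decay. rewrite opp_IZR, logbr_opp. reflexivity. Qed.

Lemma decay_decreasing al m : 0 <= al -> (0 <= m)%Z -> decay al (m + 1) <= decay al m.
Proof.
  intros Hal Hm. unfold decay. apply exp_le_compat.
  assert (logbr (IZR m) <= logbr (IZR (m + 1))).
  { apply logbr_mono. rewrite plus_IZR. apply IZR_le in Hm. rewrite !Rabs_right; lra. }
  assert (al * logbr (IZR m) <= al * logbr (IZR (m + 1))) by (apply Rmult_le_compat_l; lra).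
  lra.
Qed.

(** A potential on [Z], bounded in [0, 2 D], whose increments dominate the
    decay profile on both half-lines. *)
Definition decay_potential (al : R) (y : Z) : R :=
  if Z.leb 0 y then 2 * decay_sum_const al - decay_sum_const al * tail_pow al (IZR y)
  else decay_sum_const al * tail_pow al (IZR (- y)).

Lemma decay_potential_step al y : 1 < al ->
  decay al y <= decay_potential al (y + 1) - decay_potential al y.
Proof.
  intros Hal. pose proof (decay_sum_const_pos al Hal).
  unfold decay_potential. destruct (Z_le_gt_dec 0 y) as [Hy|Hy].
  - replace (Z.leb 0 (y + 1)) with true by (symmetry; apply Z.leb_le; lia).
    replace (Z.leb 0 y) with true by (symmetry; apply Z.leb_le; lia).
    rewrite plus_IZR. pose proof (decay_le_tail_diff al (IZR y) Hal (IZR_le _ _ Hy)).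
    unfold decay. lra.
  - replace (Z.leb 0 y) with false by (symmetry; apply Z.leb_gt; lia).
    replace (IZR (- y)) with (IZR (- y - 1) + 1) by (rewrite <- plus_IZR; f_equal; lia).
    assert (E : (if Z.leb 0 (y + 1) then 2 * decay_sum_const al - decay_sum_const al * tail_pow al (IZR (y + 1))
                 else decay_sum_const al * tail_pow al (IZR (- (y + 1))))
                = decay_sum_const al * tail_pow al (IZR (- y - 1))).
    { destruct (Z.leb 0 (y + 1)) eqn:Ey.
      - apply Z.leb_le in Ey. replace (y + 1)%Z with 0%Z by lia.
        replace (- y - 1)%Z with 0%Z by lia. rewrite tail_pow_0. ring.
      - do 3 f_equal. lia. }
    rewrite E.
    pose proof (decay_le_tail_diff al (IZR (- y - 1)) Hal (IZR_le 0 (- y - 1) ltac:(lia))).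
    pose proof (decay_decreasing al (- y - 1) ltac:(lra) ltac:(lia)) as Hdec.
    replace (- y - 1 + 1)%Z with (- y)%Z in Hdec by lia. rewrite decay_even in Hdec.
    unfold decay in *. lra.
Qed.

Lemma decay_potential_bounds al y : 1 < al -> 0 <= decay_potential al y <= 2 * decay_sum_const al.
Proof.
  intros Hal. pose proof (decay_sum_const_pos al Hal). unfold decay_potential.
  destruct (Z.leb 0 y) eqn:E.
  - apply Z.leb_le in E. pose proof (tail_pow_bounds al (IZR y) Hal (IZR_le 0 _ E)). nra.
  - apply Z.leb_gt in E. pose proof (tail_pow_bounds al (IZR (- y)) Hal (IZR_le 0 (- y) ltac:(lia))).
    nra.
Qed.

Definition window_bounded (f : Z -> R) (F : R) : Prop :=
  (forall y, 0 <= f y) /\ forall N c, zsum N (fun k => f (k + c)%Z) <= F.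

Lemma window_bounded_nonneg f F : window_bounded f F -> 0 <= F.
Proof. intros [H0 H1]. eapply Rle_trans; [|apply (H1 0%nat 0%Z)]. apply zsum_nonneg. auto. Qed.

Lemma window_bounded_of_centered f F : (forall y, 0 <= f y) -> (forall M, zsum M f <= F) ->
  window_bounded f F.
Proof. intros H0 H1. split; auto. intros N c. apply zsum_shift_le; auto. Qed.

Lemma decay_window_bounded al : 1 < al -> window_bounded (decay al) (2 * decay_sum_const al).
Proof.
  intros Hal. split; [intros; left; apply decay_pos|]. intros N c.
  rewrite zsum_shift_seg.
  eapply Rle_trans; [apply seg_sum_telescope; intros; apply decay_potential_step; auto|].
  pose proof (decay_potential_bounds al (c - Z.of_nat N + Z.of_nat (2 * N) + 1) Hal).
  pose proof (decay_potential_bounds al (c - Z.of_nat N) Hal). lra.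
Qed.

Lemma decay2_window_bounded al n : 1 < al ->
  window_bounded (decay2 al n) (4 * decay_sum_const al).
Proof.
  intros Hal. destruct (decay_window_bounded al Hal) as [_ H1].
  split; [intros; apply decay2_nonneg|]. intros N c. unfold decay2.
  rewrite (zsum_ext N _ (fun k => decay al (k + c)%Z + decay al (k + (c - n))%Z))
    by (intros; f_equal; f_equal; lia).
  rewrite zsum_plus. pose proof (H1 N c). pose proof (H1 N (c - n)%Z). lra.
Qed.

(** Double window sums of products [f a * g (b + c a)] are bounded by the
    product of the window bounds; this covers the three pairings in
    [pair_profile]. *)
Lemma window_shift_le K f g F G (c : Z -> Z) : window_bounded f F -> window_bounded g G ->
  zsum2 K (fun a b => f a * g (b + c a)%Z) <= F * G.
Proof.
  intros Hf Hg. pose proof (window_bounded_nonneg _ _ Hg).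
  destruct Hf as [Hf0 Hf1]. destruct Hg as [Hg0 Hg1]. unfold zsum2.
  eapply Rle_trans.
  - apply zsum_le with (g := fun a => G * f a). intros a. rewrite zsum_scal, Rmult_comm.
    apply Rmult_le_compat_r; auto.
  - rewrite zsum_scal, (zsum_ext K f (fun k => f (k + 0)%Z)) by (intros; f_equal; lia).
    pose proof (Hf1 K 0%Z). nra.
Qed.

Lemma window_product_le K f g F G : window_bounded f F -> window_bounded g G ->
  zsum2 K (fun a b => f a * g b) <= F * G.
Proof.
  intros Hf Hg. rewrite (zsum2_ext K _ (fun a b => f a * g (b + (fun _ => 0) a)%Z))
    by (intros; do 2 f_equal; lia).
  apply window_shift_le; auto.
Qed.

Lemma window_convol_le K f g F G : window_bounded f F -> window_bounded g G ->
  zsum2 K (fun a b => f a * g (a + b)%Z) <= F * G.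
Proof.
  intros Hf Hg. rewrite (zsum2_ext K _ (fun a b => f a * g (b + (fun x => x) a)%Z))
    by (intros; do 2 f_equal; lia).
  apply window_shift_le; auto.
Qed.

Lemma window_convol_le_swap K f g F G : window_bounded f F -> window_bounded g G ->
  zsum2 K (fun a b => f b * g (a + b)%Z) <= F * G.
Proof.
  intros Hf Hg. unfold zsum2. rewrite zsum_swap.
  pose proof (window_convol_le K f g F G Hf Hg) as H. unfold zsum2 in H.
  rewrite (zsum_ext K _ (fun a => zsum K (fun b => f a * g (a + b)%Z))); auto.
  intros; apply zsum_ext; intros; do 2 f_equal; lia.
Qed.

Definition kernel_sum_const (s q : R) : R :=
  exp (q * decay_const s) * (3 * (4 * decay_sum_const (q * (s + /4))) ^ 2).

Lemma kernel_sum_const_pos s q : 1 < q * (s + /4) -> 0 < kernel_sum_const s q.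
Proof.
  intros H. unfold kernel_sum_const. pose proof (decay_sum_const_pos _ H).
  apply Rmult_lt_0_compat; [apply exp_pos| nra].
Qed.

Lemma kernel_pow_sum_le s q n K : s >= 1/4 -> 0 < q -> 1 < q * (s + /4) ->
  zsum2 K (fun n1 n2 => rpow (kernel s n n1 n2) q) <= kernel_sum_const s q.
Proof.
  intros Hs Hq Hal. set (al := q * (s + /4)) in *.
  pose proof (decay2_window_bounded al n Hal) as HB.
  eapply Rle_trans; [apply zsum2_le; intros; apply kernel_pow_bound; auto|].
  rewrite zsum2_scal. unfold kernel_sum_const. fold al.
  apply Rmult_le_compat_l; [left; apply exp_pos|].
  unfold pair_profile. rewrite !zsum2_plus.
  pose proof (window_product_le K _ _ _ _ HB HB). pose proof (window_convol_le K _ _ _ _ HB HB).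
  pose proof (window_convol_le_swap K _ _ _ _ HB HB). lra.
Qed.

Lemma monotone_cv (u : nat -> R) B :
  (forall K, u K <= u (S K)) -> (forall K, u K <= B) -> { l | Un_cv u l }.
Proof. intros H1 H2. apply growing_cv; [exact H1|]. exists B. intros x [i ->]. apply H2. Qed.

Lemma lim_le (u : nat -> R) l B : Un_cv u l -> (forall K, u K <= B) -> l <= B.
Proof.
  intros Hc Hb. apply Rnot_lt_le. intros Hlt.
  destruct (Hc (l - B)) as [K HK]; [lra|].
  specialize (HK K (le_n K)). unfold Rdist in HK. specialize (Hb K).
  unfold Rabs in HK; destruct Rcase_abs; lra.
Qed.

Lemma lim_abs_le (u : nat -> R) l B : Un_cv u l -> (forall K, Rabs (u K) <= B) -> Rabs l <= B.
Proof. intros Hc Hb. apply (lim_le (fun K => Rabs (u K))); auto. apply cv_cvabs; auto. Qed.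

(** An absolutely convergent double series converges: split into positive and
    negative parts, each a bounded nondecreasing sequence of partial sums. *)
Lemma abs_series_cv (T : Z -> Z -> R) B :
  (forall K, zsum2 K (fun a b => Rabs (T a b)) <= B) -> { l | Un_cv (fun K => zsum2 K T) l }.
Proof.
  intros HB.
  set (Tp := fun a b => (Rabs (T a b) + T a b) / 2).
  set (Tm := fun a b => (Rabs (T a b) - T a b) / 2).
  assert (Hp : forall a b, 0 <= Tp a b /\ Tp a b <= Rabs (T a b))
    by (intros; unfold Tp, Rabs; destruct Rcase_abs; lra).
  assert (Hm : forall a b, 0 <= Tm a b /\ Tm a b <= Rabs (T a b))
    by (intros; unfold Tm, Rabs; destruct Rcase_abs; lra).
  destruct (monotone_cv (fun K => zsum2 K Tp) B) as [lp Hlp].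
  { intros; apply zsum2_mono; [apply Hp| lia]. }
  { intros K. eapply Rle_trans; [|apply (HB K)]. apply zsum2_le. apply Hp. }
  destruct (monotone_cv (fun K => zsum2 K Tm) B) as [lm Hlm].
  { intros; apply zsum2_mono; [apply Hm| lia]. }
  { intros K. eapply Rle_trans; [|apply (HB K)]. apply zsum2_le. apply Hm. }
  exists (lp - lm).
  assert (E : forall K, zsum2 K T = zsum2 K Tp - zsum2 K Tm).
  { intros K. rewrite <- zsum2_minus. apply zsum2_ext. intros; unfold Tp, Tm. field. }
  intros eps Heps. destruct (CV_minus _ _ _ _ Hlp Hlm eps Heps) as [N HN].
  exists N. intros K HK. rewrite E. apply HN; auto.
Qed.

Lemma sum_f_R0_cv (u : nat -> nat -> R) (l : nat -> R) m :
  (forall i, Un_cv (fun K => u K i) (l i)) ->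
  Un_cv (fun K => sum_f_R0 (fun i => u K i) m) (sum_f_R0 l m).
Proof. intros H. induction m as [|m IH]; simpl; [apply H| apply CV_plus; auto]. Qed.

Lemma zsum_cv (u : nat -> Z -> R) (l : Z -> R) N :
  (forall n, Un_cv (fun K => u K n) (l n)) ->
  Un_cv (fun K => zsum N (fun n => u K n)) (zsum N l).
Proof. intros H. unfold zsum. apply (sum_f_R0_cv (fun K i => u K (Z.of_nat i - Z.of_nat N)%Z)). auto. Qed.

Definition coeff_prod (a1 a2 a3 : Z -> R) (n n1 n2 : Z) : R :=
  Rabs (a1 n1) * Rabs (a2 n2) * Rabs (a3 (n - n1 - n2)%Z).

Lemma coeff_prod_nonneg a1 a2 a3 n n1 n2 : 0 <= coeff_prod a1 a2 a3 n n1 n2.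
Proof.
  unfold coeff_prod. pose proof (Rabs_pos (a1 n1)). pose proof (Rabs_pos (a2 n2)).
  pose proof (Rabs_pos (a3 (n - n1 - n2)%Z)). apply Rmult_le_pos; [apply Rmult_le_pos|]; auto.
Qed.

Lemma abs_S1_term s a1 a2 a3 n n1 n2 :
  Rabs (S1_term s a1 a2 a3 n n1 n2) = kernel s n n1 n2 * coeff_prod a1 a2 a3 n n1 n2.
Proof.
  rewrite S1_term_kernel. unfold coeff_prod. rewrite !Rabs_mult.
  rewrite (Rabs_right (kernel s n n1 n2)) by (apply Rle_ge, kernel_nonneg). ring.
Qed.

Lemma abs_S1_sum s a1 a2 a3 n K :
  zsum2 K (fun a b => Rabs (S1_term s a1 a2 a3 n a b))
  = zsum2 K (fun a b => kernel s n a b * coeff_prod a1 a2 a3 n a b).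
Proof. apply zsum2_ext; intros; apply abs_S1_term. Qed.

Lemma S1_exists s a1 a2 a3 (B : Z -> R) :
  (forall n K, zsum2 K (fun n1 n2 => kernel s n n1 n2 * coeff_prod a1 a2 a3 n n1 n2) <= B n) ->
  exists b, S1_is s a1 a2 a3 b /\ forall n, Rabs (b n) <= B n.
Proof.
  intros HB.
  assert (HQ : forall n K, zsum2 K (fun a b => Rabs (S1_term s a1 a2 a3 n a b)) <= B n)
    by (intros; rewrite abs_S1_sum; apply HB).
  set (b := fun n => proj1_sig (abs_series_cv (S1_term s a1 a2 a3 n) _ (HQ n))).
  assert (Hb : forall n, Un_cv (fun K => zsum2 K (S1_term s a1 a2 a3 n)) (b n))
    by (intros; unfold b; apply proj2_sig).
  exists b. split.
  - intros n. split; [exists (B n); apply HQ| apply Hb].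
  - intros n. apply (lim_abs_le _ _ _ (Hb n)). intros K.
    eapply Rle_trans; [apply zsum2_abs| apply HQ].
Qed.

(** Young's inequality in [l^1] for the triple convolution, on windows. *)
Lemma triple_convolution_le f1 f2 f3 A1 A2 A3 N K :
  (forall y, 0 <= f1 y) -> (forall y, 0 <= f2 y) -> (forall y, 0 <= f3 y) ->
  (forall M, zsum M f1 <= A1) -> (forall M, zsum M f2 <= A2) -> (forall M, zsum M f3 <= A3) ->
  zsum N (fun n => zsum2 K (fun n1 n2 => f1 n1 * f2 n2 * f3 (n - n1 - n2)%Z)) <= A1 * A2 * A3.
Proof.
  intros H1 H2 H3 S1 S2 S3.
  pose proof (window_bounded_of_centered f1 A1 H1 S1) as B1.
  pose proof (window_bounded_of_centered f2 A2 H2 S2) as B2.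
  destruct (window_bounded_of_centered f3 A3 H3 S3) as [_ B3].
  assert (HA3 : 0 <= A3) by (eapply Rle_trans; [apply (zsum_nonneg 0 f3 H3)| apply S3]).
  unfold zsum2. rewrite zsum_swap.
  eapply Rle_trans.
  - apply zsum_le with (g := fun n1 => zsum K (fun n2 => A3 * (f1 n1 * f2 n2))).
    intros n1. rewrite zsum_swap. apply zsum_le. intros n2.
    rewrite (zsum_ext N _ (fun n => (f1 n1 * f2 n2) * f3 (n + (- n1 - n2))%Z))
      by (intros; f_equal; f_equal; lia).
    rewrite zsum_scal. pose proof (B3 N (- n1 - n2)%Z).
    assert (0 <= f1 n1 * f2 n2) by (apply Rmult_le_pos; auto). nra.
  - pose proof (window_product_le K _ _ _ _ B1 B2) as H. unfold zsum2 in H.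
    rewrite (zsum_ext K _ (fun a => A3 * zsum K (fun b => f1 a * f2 b)))
      by (intros; rewrite <- zsum_scal; reflexivity).
    rewrite zsum_scal. nra.
Qed.

(** * The [l^p] estimates *)

Lemma lp_fin_bound r a M : 0 < r -> lp_le (Fin r) a M ->
  0 <= M /\ forall N, zsum N (fun n => rpow (Rabs (a n)) r) <= rpow M r.
Proof.
  intros Hr H. simpl in H.
  assert (HM : 0 <= M) by (eapply Rle_trans; [apply rpow_nonneg| apply (H 0%nat)]).
  split; auto. intros N.
  assert (HZ : 0 <= zsum N (fun n => rpow (Rabs (a n)) r))
    by (apply zsum_nonneg; intros; apply rpow_nonneg).
  rewrite <- (rpow_root_r _ r HZ Hr).
  apply rpow_le_compat; [split; [apply rpow_nonneg| apply H]| auto].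
Qed.

Lemma lp_inf_nonneg a M : lp_le Infty a M -> 0 <= M.
Proof. intros H. eapply Rle_trans; [apply Rabs_pos| apply (H 0%Z)]. Qed.

Lemma coeff_prod_pow_sum_le r a1 a2 a3 M1 M2 M3 N K : 0 < r ->
  lp_le (Fin r) a1 M1 -> lp_le (Fin r) a2 M2 -> lp_le (Fin r) a3 M3 ->
  zsum N (fun n => zsum2 K (fun n1 n2 => rpow (coeff_prod a1 a2 a3 n n1 n2) r))
  <= rpow M1 r * rpow M2 r * rpow M3 r.
Proof.
  intros Hr H1 H2 H3.
  apply lp_fin_bound in H1, H2, H3; auto.
  eapply Rle_trans; [|apply (triple_convolution_le (fun y => rpow (Rabs (a1 y)) r)
                                     (fun y => rpow (Rabs (a2 y)) r) (fun y => rpow (Rabs (a3 y)) r));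
                      try apply H1; try apply H2; try apply H3; intros; apply rpow_nonneg].
  right. apply zsum_ext; intros n. apply zsum2_ext; intros n1 n2.
  unfold coeff_prod. rewrite !rpow_mult by (try apply Rmult_le_pos; apply Rabs_pos). reflexivity.
Qed.

Lemma monotone_limits (u : Z -> nat -> R) A :
  (forall n K, 0 <= u n K) -> (forall n K, u n K <= u n (S K)) ->
  (forall N K, zsum N (fun n => u n K) <= A) ->
  exists C : Z -> R, (forall n K, u n K <= C n) /\ (forall N, zsum N C <= A).
Proof.
  intros H0 Hmon HA.
  assert (Hpt : forall n K, u n K <= A).
  { intros n K. eapply Rle_trans; [|apply (HA (Z.abs_nat n) K)].
    apply (zsum_single (fun m => u m K)); auto. }
  set (C := fun n => proj1_sig (monotone_cv (u n) A (Hmon n) (Hpt n))).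
  assert (HC : forall n, Un_cv (u n) (C n)) by (intros; unfold C; apply proj2_sig).
  exists C. split.
  - intros n K. apply (growing_ineq (u n)); [exact (Hmon n)| exact (HC n)].
  - intros N. apply (lim_le (fun K => zsum N (fun n => u n K))); auto.
    apply zsum_cv. auto.
Qed.

Lemma lp_estimate_fin s r Lam : 0 < r -> 0 <= Lam ->
  (forall a1 a2 a3 n K,
     rpow (zsum2 K (fun n1 n2 => kernel s n n1 n2 * coeff_prod a1 a2 a3 n n1 n2)) r
       <= Lam * zsum2 K (fun n1 n2 => rpow (coeff_prod a1 a2 a3 n n1 n2) r)) ->
  forall a1 a2 a3 M1 M2 M3,
    lp_le (Fin r) a1 M1 -> lp_le (Fin r) a2 M2 -> lp_le (Fin r) a3 M3 ->
    exists b, S1_is s a1 a2 a3 b /\ lp_le (Fin r) b (rpow Lam (/ r) * (M1 * M2 * M3)).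
Proof.
  intros Hr HLam Hfibre a1 a2 a3 M1 M2 M3 H1 H2 H3.
  set (A := rpow M1 r * rpow M2 r * rpow M3 r).
  set (Sk := fun n K => zsum2 K (fun n1 n2 => rpow (coeff_prod a1 a2 a3 n n1 n2) r)).
  destruct (monotone_limits Sk A) as [C [HSC HC]].
  { intros; apply zsum2_nonneg; intros; apply rpow_nonneg. }
  { intros; apply zsum2_mono; [intros; apply rpow_nonneg| lia]. }
  { intros; apply coeff_prod_pow_sum_le; auto. }
  assert (HC0 : forall n, 0 <= C n)
    by (intros n; eapply Rle_trans; [apply zsum2_nonneg; intros; apply rpow_nonneg| apply (HSC n 0%nat)]).
  destruct (S1_exists s a1 a2 a3 (fun n => rpow (Lam * C n) (/ r))) as [b [Hb Hbn]].
  { intros n K. apply rpow_le_root; auto.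
    - apply zsum2_nonneg; intros; apply Rmult_le_pos; [apply kernel_nonneg| apply coeff_prod_nonneg].
    - eapply Rle_trans; [apply Hfibre|]. apply Rmult_le_compat_l; auto. apply HSC. }
  exists b. split; auto. simpl. intros N.
  assert (Hbr : forall n, rpow (Rabs (b n)) r <= Lam * C n).
  { intros n. rewrite <- (rpow_root_r (Lam * C n) r) by (auto; apply Rmult_le_pos; auto).
    apply rpow_le_compat; auto. split; [apply Rabs_pos| apply Hbn]. }
  assert (Hsum : zsum N (fun n => rpow (Rabs (b n)) r) <= Lam * A).
  { eapply Rle_trans; [apply zsum_le, Hbr|]. rewrite zsum_scal.
    apply Rmult_le_compat_l; auto. }
  destruct (lp_fin_bound r a1 M1 Hr H1) as [HM1 _].
  destruct (lp_fin_bound r a2 M2 Hr H2) as [HM2 _].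
  destruct (lp_fin_bound r a3 M3 Hr H3) as [HM3 _].
  eapply Rle_trans.
  - apply rpow_le_compat; [split; [apply zsum_nonneg; intros; apply rpow_nonneg| exact Hsum]|].
    apply Rinv_0_lt_compat; auto.
  - unfold A. pose proof (rpow_nonneg M1 r). pose proof (rpow_nonneg M2 r).
    pose proof (rpow_nonneg M3 r).
    rewrite !rpow_mult, !rpow_r_root by (try apply Rmult_le_pos; try apply Rmult_le_pos; auto).
    lra.
Qed.

Lemma lp_estimate_inf s W : 0 <= W ->
  (forall n K, zsum2 K (fun n1 n2 => kernel s n n1 n2) <= W) ->
  forall a1 a2 a3 M1 M2 M3,
    lp_le Infty a1 M1 -> lp_le Infty a2 M2 -> lp_le Infty a3 M3 ->
    exists b, S1_is s a1 a2 a3 b /\ lp_le Infty b (W * (M1 * M2 * M3)).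
Proof.
  intros HW HWb a1 a2 a3 M1 M2 M3 H1 H2 H3.
  pose proof (lp_inf_nonneg _ _ H1). pose proof (lp_inf_nonneg _ _ H2).
  pose proof (lp_inf_nonneg _ _ H3).
  assert (Hc : forall n n1 n2, coeff_prod a1 a2 a3 n n1 n2 <= M1 * M2 * M3).
  { intros. unfold coeff_prod. pose proof (Rabs_pos (a1 n1)). pose proof (Rabs_pos (a2 n2)).
    apply Rmult_le_compat; [apply Rmult_le_pos; auto| apply Rabs_pos| |apply H3].
    apply Rmult_le_compat; auto. }
  apply S1_exists. intros n K.
  eapply Rle_trans; [apply zsum2_le with (h := fun a b => (M1 * M2 * M3) * kernel s n a b)|].
  - intros a b. rewrite (Rmult_comm (M1 * M2 * M3)). apply Rmult_le_compat_l; [apply kernel_nonneg| apply Hc].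
  - rewrite zsum2_scal, (Rmult_comm W). apply Rmult_le_compat_l; [|apply HWb].
    apply Rmult_le_pos; [apply Rmult_le_pos|]; auto.
Qed.

Definition S1_bounded (s : R) (p : expo) : Prop :=
  exists C : R,
    forall (a1 a2 a3 : Z -> R) (M1 M2 M3 : R),
      lp_le p a1 M1 -> lp_le p a2 M2 -> lp_le p a3 M3 ->
      exists b : Z -> R, S1_is s a1 a2 a3 b /\ lp_le p b (C * (M1 * M2 * M3)).

(** [p = 1]: the kernel is bounded. *)
Lemma S1_bounded_l1 s : s >= 1/4 -> S1_bounded s (Fin 1).
Proof.
  intros Hs. exists (rpow (exp (decay_const s)) (/ 1)). intros a1 a2 a3 M1 M2 M3.
  apply lp_estimate_fin; [lra| left; apply exp_pos|]. intros b1 b2 b3 n K.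
  rewrite !rpow_1 by (apply zsum2_nonneg; intros; try apply rpow_nonneg;
                      apply Rmult_le_pos; [apply kernel_nonneg| apply coeff_prod_nonneg]).
  rewrite <- zsum2_scal. apply zsum2_le. intros n1 n2.
  rewrite rpow_1 by apply coeff_prod_nonneg.
  apply Rmult_le_compat_r; [apply coeff_prod_nonneg| apply kernel_le_const; auto].
Qed.

(** [1 < p < oo]: Hölder on each fibre with the conjugate exponent [q]. *)
Lemma S1_bounded_lp s r : s >= 1/4 -> 1 < r -> r / (r - 1) * (s + 1/4) > 1 ->
  S1_bounded s (Fin r).
Proof.
  intros Hs Hr Hq. set (q := r / (r - 1)) in *.
  assert (Hq0 : 0 < q) by (unfold q; apply Rdiv_lt_0_compat; lra).
  assert (Hqr : / q + / r = 1) by (unfold q; field; lra).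
  assert (Hal : 1 < q * (s + /4)) by lra.
  exists (rpow (rpow (kernel_sum_const s q) (r - 1)) (/ r)). intros a1 a2 a3 M1 M2 M3.
  apply lp_estimate_fin; [lra| apply rpow_nonneg|]. intros b1 b2 b3 n K.
  apply holder2 with (q := q); try lra.
  - intros; apply kernel_nonneg.
  - intros; apply coeff_prod_nonneg.
  - apply kernel_sum_const_pos; auto.
  - apply kernel_pow_sum_le; auto.
Qed.

(** [p = oo]: the kernel is summable in [(n1, n2)] uniformly in [n]. *)
Lemma S1_bounded_linf s : s >= 1/4 -> 1 * (s + 1/4) > 1 -> S1_bounded s Infty.
Proof.
  intros Hs Hal. exists (kernel_sum_const s 1). intros a1 a2 a3 M1 M2 M3.
  apply lp_estimate_inf; [left; apply kernel_sum_const_pos; lra|]. intros n K.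
  eapply Rle_trans; [|apply (kernel_pow_sum_le s 1 n K); lra].
  right. apply zsum2_ext; intros. rewrite rpow_1; auto. apply kernel_nonneg.
Qed.

Theorem proposition3p4 (s : R) (p : expo) :
  s >= 1/4 ->
  valid_expo p ->
  expo_mul_gt1 (conj_expo p) (s + 1/4) ->
  exists C : R,
    forall (a1 a2 a3 : Z -> R) (M1 M2 M3 : R),
      lp_le p a1 M1 -> lp_le p a2 M2 -> lp_le p a3 M3 ->
      exists b : Z -> R,
        S1_is s a1 a2 a3 b /\ lp_le p b (C * (M1 * M2 * M3)).
Proof.
  intros Hs Hp Hc. fold (S1_bounded s p).
  destruct p as [r|]; simpl in Hp, Hc.
  - destruct (Req_EM_T r 1) as [-> | Hr1].
    + apply S1_bounded_l1; auto.
    + apply S1_bounded_lp; auto; lra.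
  - apply S1_bounded_linf; auto.
Qed.
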